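(* Let $\mathcal{U}$ be a Hilbert space, $\mathcal{W},\mathcal{Y}$ reflexive Banach spaces, $\mathcal{G}$ a Hilbert space, $g^\delta\in\mathcal{G}$, $\alpha>0$, $A\in L(\mathcal{Y},\mathcal{W}^* )$ continuously invertible, $B\in L(\mathcal{U},\mathcal{W}^* )$, $C\in L(\mathcal{Y},\mathcal{G})$, and let $\mathcal{R}_\alpha=\frac\alpha2\|\cdot\|_\mathcal{U}^2$ and $J_\alpha(u,y)=\frac12\|Cy-g^\delta\|_\mathcal{G}^2+\mathcal{R}_\alpha(u)$. Let $\mathcal{U}_h\subset\mathcal{U}$, $\mathcal{Y}_h\subset\mathcal{Y}$, $\mathcal{W}_h\subset\mathcal{W}$ be finite-dimensional subspaces. Let $(\bar u,\bar y)$ minimize $J_\alpha(u,y)$ over $\mathcal{U}\times\mathcal{Y}$ subject to $Ay=Bu$, and let $(\bar u_h,\bar y_h)$ minimize $J_\alpha$ over $\mathcal{U}_h\times\mathcal{Y}_h$ subject to $\langle Ay-Bu,w_h\rangle_{\mathcal{W}^*,\mathcal{W}}=0$ for all $w_h\in\mathcal{W}_h$, with $\bar w_h\in\mathcal{W}_h$ such that $(\bar u_h,\bar y_h,\bar w_h)$ satisfies the discrete optimality system $$\langle C^*(C\bar y_h-g^\delta)+A^*\bar w_h,y_h\rangle_{\mathcal{Y}^*,\mathcal{Y}}=0\ \ \forall y_h\in\mathcal{Y}_h,\qquad \alpha\bar u_h-P_{\mathcal{U}_h}B^*\bar w_h=0,\qquad \langle A\bar y_h-B\bar u_h,w_h\rangle_{\mathcal{W}^*,\mathcal{W}}=0\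 \ \forall w_h\in\mathcal{W}_h.$$ Define the residuals $$\rho_w:=C^*(C\bar y_h-g^\delta)+A^*\bar w_h\in\mathcal{Y}^*,\qquad \rho_u:=\alpha\bar u_h-B^*\bar w_h\in\mathcal{U},\qquad \rho_y:=A\bar y_h-B\bar u_h\in\mathcal{W}^*.$$ Let $\sigma,\gamma$ satisfy either ($\sigma=4$ and $\gamma\ge2$) or ($\sigma>4$ and $\gamma>\frac{2\sigma}{\sigma+\sqrt{\sigma^2-4\sigma}}$). Then $$\alpha\|\bar u_h-\bar u\|_\mathcal{U}^2+\|C\bar y_h-C\bar y\|_\mathcal{G}^2\le\frac\gamma\alpha\|B^*(A^* )^{-1}\rho_w+\rho_u\|_\mathcal{U}^2+\sigma\|CA^{-1}\rho_y\|_\mathcal{G}^2,$$ $$J_\alpha(\bar u_h,\bar y_h)-J_\alpha(\bar u,\bar y)\le\frac1{2\alpha}\|B^*(A^* )^{-1}\rho_w+\rho_u\|_\mathcal{U}^2+(C\bar y_h-g^\delta,CA^{-1}\rho_y)_\mathcal{G}.$$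
   Context: Adjoints: $A^*\in L(\mathcal{W},\mathcal{Y}^* )$ with $\langle Ay,w\rangle_{\mathcal{W}^*,\mathcal{W}}=\langle y,A^*w\rangle_{\mathcal{Y},\mathcal{Y}^*}$; $B^*\in L(\mathcal{W},\mathcal{U})$ with $\langle Bu,w\rangle_{\mathcal{W}^*,\mathcal{W}}=(u,B^*w)_\mathcal{U}$; $C^*\in L(\mathcal{G},\mathcal{Y}^* )$ with $(Cy,g)_\mathcal{G}=\langle y,C^*g\rangle_{\mathcal{Y},\mathcal{Y}^*}$. $P_{\mathcal{U}_h}$ is the orthogonal projection of $\mathcal{U}$ onto $\mathcal{U}_h$. *)

From mathcomp Require Import all_boot all_order all_algebra.
From mathcomp Require Import all_classical all_reals all_analysis.
Set Implicit Arguments. Unset Strict Implicit. Unset Printing Implicit Defensive.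
Import Order.TTheory GRing.Theory Num.Theory.
Import numFieldNormedType.Exports.
Local Open Scope classical_set_scope.
Local Open Scope ring_scope.

Section Defs.
Variable R : realType.

(* (ip) is an inner product on V inducing the norm of V:
   symmetric, linear in the first argument, and ip x x = |x|^2.
   A Hilbert space is a complete normed space (completeNormedModType)
   carrying such an inner product. *)
Definition is_inner (V : normedModType R) (ip : V -> V -> R) :=
  [/\ forall x y, ip x y = ip y x,
      forall a x y z, ip (a *: x + y) z = a * ip x z + ip y z &
      forall x, ip x x = `|x| ^+ 2].

Definition is_dual (W : normedModType R) (f : W -> R) :=
  (forall a x y, f (a *: x + y) = a * f x + f y) /\
  exists M : R, forall w, `|f w| <= M * `|w|.

Definition dual_norm_le (W : normedModType R) (f : W -> R) (c : R) :=
  forall w, `|f w| <= c * `|w|.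

(* W is reflexive: every bounded linear functional on W^* is the evaluation
   at some w in W (surjectivity of the canonical embedding W -> W^{**} ). *)
Definition reflexive_space (W : normedModType R) :=
  forall phi : (W -> R) -> R,
    (forall a f g, is_dual f -> is_dual g ->
       phi (fun w => a * f w + g w) = a * phi f + phi g) ->
    (exists M : R, forall f c, is_dual f -> 0 <= c -> dual_norm_le f c ->
       `|phi f| <= M * c) ->
    exists w : W, forall f, is_dual f -> phi f = f w.

Definition bounded_linear (V1 V2 : normedModType R) (T : V1 -> V2) :=
  (forall a x y, T (a *: x + y) = a *: T x + T y) /\
  exists M : R, forall x, `|T x| <= M * `|x|.

(* Bounded linear operators into a dual space: L(V, W^{*}); T x w = <T x, w>. *)
Definition dual_op (V W : normedModType R) (T : V -> W -> R) :=
  [/\ forall x, is_dual (T x),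
      forall a x y w, T (a *: x + y) w = a * T x w + T y w &
      exists M : R, forall x w, `|T x w| <= M * `|x| * `|w|].

Definition cont_invertible (Y W : normedModType R) (A : Y -> W -> R) :=
  [/\ dual_op A,
      forall y, (forall w, A y w = 0) -> y = 0,
      forall f, is_dual f -> exists y, forall w, A y w = f w &
      exists M : R, forall y c, 0 <= c -> dual_norm_le (A y) c -> `|y| <= M * c].

Definition fin_subspace (V : lmodType R) (S : set V) :=
  exists s : seq V,
    S = [set v | exists c : 'I_(size s) -> R, v = \sum_(i < size s) c i *: s`_i].

Definition orth_proj (V : normedModType R) (ip : V -> V -> R) (S : set V) (x : V) : V :=
  xget 0 [set p | S p /\ forall v, S v -> ip (x - p) v = 0].

Definition op_inv (Y W : normedModType R) (A : Y -> W -> R) (f : W -> R) : Y :=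
  xget 0 [set y | forall w, A y w = f w].

Definition adj_dual (Y W : normedModType R) (A : Y -> W -> R) (w : W) : Y -> R :=
  fun y => A y w.

Definition adj_dual_inv (Y W : normedModType R) (A : Y -> W -> R) (f : Y -> R) : W :=
  xget 0 [set w | forall y, A y w = f y].

Definition adj_obs (Y G : normedModType R) (ipG : G -> G -> R) (C : Y -> G) (g : G)
  : Y -> R := fun y => ipG (C y) g.

Definition Jalpha (U Y G : normedModType R) (C : Y -> G) (g : G) (alpha : R)
  (u : U) (y : Y) : R :=
  2^-1 * `|C y - g| ^+ 2 + alpha / 2 * `|u| ^+ 2.

End Defs.

From mathcomp Require Import all_boot all_order all_algebra.
From mathcomp Require Import all_classical all_reals all_analysis.
From mathcomp Require Import ring lra.
Set Implicit Arguments. Unset Strict Implicit.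
Import Order.TTheory GRing.Theory Num.Theory.
Import numFieldNormedType.Exports.
Local Open Scope classical_set_scope.
Local Open Scope ring_scope.

(* Put e := ubh - ub, z := A^{-1} rho_y, q := (A^* )^{-1} rho_w and r := B^* q + rho_u.
   The pair (ubh - ub, ybh - z - yb) satisfies the continuous state equation, so the
   first-order condition of the continuous problem in that direction, combined with
   rho_w tested on ybh - z - yb, gives the error identity
     alpha |e|^2 + |C (ybh - yb)|^2 = (e, r)_U + (C (ybh - yb), C z)_G.
   Young's inequality then yields both estimates, the first one already with
   gamma = sigma = 1; the admissible (sigma, gamma) all satisfy sigma, gamma >= 1.
   Reflexivity of W is what makes (A^* )^{-1} rho_w exist. *)

Section ScalarLinear.
Variables (R : realType) (V : lmodType R) (f : V -> R).
Hypothesis f_lin : forall a x y, f (a *: x + y) = a * f x + f y.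

Lemma lin0 : f 0 = 0.
Proof. by have := f_lin 1 0 0; rewrite scaler0 addr0 mul1r; lra. Qed.

Lemma linD x y : f (x + y) = f x + f y.
Proof. by have := f_lin 1 x y; rewrite scale1r mul1r. Qed.

Lemma linZ a x : f (a *: x) = a * f x.
Proof. by have := f_lin a x 0; rewrite !addr0 lin0 addr0. Qed.

Lemma linB x y : f (x - y) = f x - f y.
Proof. by rewrite addrC -scaleN1r f_lin mulN1r addrC. Qed.

End ScalarLinear.

Lemma bounded_linearB (R : realType) (V1 V2 : normedModType R) (T : V1 -> V2)
  (hT : bounded_linear T) x y : T (x - y) = T x - T y.
Proof. by rewrite addrC -scaleN1r (proj1 hT) scaleN1r addrC. Qed.

Lemma dual_opB (R : realType) (V W : normedModType R) (T : V -> W -> R)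
  (hT : dual_op T) x y w : T (x - y) w = T x w - T y w.
Proof. by case: hT => _ hlin _; exact: (linB (f := T^~ w)). Qed.

Section InnerProduct.
Variables (R : realType) (V : normedModType R) (ip : V -> V -> R).
Hypothesis ipV : is_inner ip.

Lemma ipDl x y z : ip (x + y) z = ip x z + ip y z.
Proof. by case: ipV => _ hlin _; exact: (linD (f := ip^~ z)). Qed.

Lemma ipZl a x z : ip (a *: x) z = a * ip x z.
Proof. by case: ipV => _ hlin _; exact: (linZ (f := ip^~ z)). Qed.

Lemma ipBl x y z : ip (x - y) z = ip x z - ip y z.
Proof. by case: ipV => _ hlin _; exact: (linB (f := ip^~ z)). Qed.

Lemma ipDr x y z : ip z (x + y) = ip z x + ip z y.
Proof. by case: ipV => hC _ _; rewrite !(hC z) ipDl. Qed.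

Lemma ipZr a x z : ip z (a *: x) = a * ip z x.
Proof. by case: ipV => hC _ _; rewrite !(hC z) ipZl. Qed.

Lemma ipBr x y z : ip z (x - y) = ip z x - ip z y.
Proof. by case: ipV => hC _ _; rewrite !(hC z) ipBl. Qed.

Lemma normD2 x y : `|x + y| ^+ 2 = `|x| ^+ 2 + 2 * ip x y + `|y| ^+ 2.
Proof. by case: ipV => hC _ hn; rewrite -!hn ipDl !ipDr (hC y x); ring. Qed.

Lemma ip_le_norm x y : ip x y <= `|x| * `|y|.
Proof.
have := normD2 x y; have := ler_normD x y.
have := normr_ge0 (x + y); have := normr_ge0 x; have := normr_ge0 y; nra.
Qed.

Lemma ip_norm_le x y : `|ip x y| <= `|x| * `|y|.
Proof.
rewrite ler_norml ip_le_norm andbT.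
by have := ip_le_norm (- x) y; rewrite normrN -scaleN1r ipZl; lra.
Qed.

Lemma ip_young a x y : 0 < a -> ip x y <= a / 2 * `|x| ^+ 2 + a^-1 / 2 * `|y| ^+ 2.
Proof.
move=> a_gt0; apply: le_trans (ip_le_norm x y) _.
have aVa : a * a^-1 = 1 by rewrite mulfV // gt_eqF.
have : 0 <= (a * `|x| - `|y|) ^+ 2 * a^-1 by rewrite mulr_ge0 ?sqr_ge0 ?invr_ge0 ?ltW.
have -> : (a * `|x| - `|y|) ^+ 2 * a^-1
  = (a * a^-1) * a * `|x| ^+ 2 - 2 * (a * a^-1) * `|x| * `|y| + a^-1 * `|y| ^+ 2
  by ring.
by rewrite aVa; lra.
Qed.

End InnerProduct.

Section DualSpace.
Variable R : realType.

Lemma is_dualD (W : normedModType R) (f g : W -> R) :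
  is_dual f -> is_dual g -> is_dual (fun w => f w + g w).
Proof.
move=> [f_lin [Mf hMf]] [g_lin [Mg hMg]]; split.
  by move=> a x y; rewrite f_lin g_lin; ring.
exists (Mf + Mg) => w; apply: le_trans (ler_normD _ _) _.
by rewrite mulrDl lerD.
Qed.

Lemma is_dualN (W : normedModType R) (f : W -> R) :
  is_dual f -> is_dual (fun w => - f w).
Proof.
move=> [f_lin [M hM]]; split; last by exists M => w; rewrite normrN.
by move=> a x y; rewrite f_lin; ring.
Qed.

Lemma is_dual_adj_dual (Y W : normedModType R) (A : Y -> W -> R) (w : W) :
  dual_op A -> is_dual (adj_dual A w).
Proof.
move=> [_ A_lin [M hM]]; split; first by move=> a x y; exact: A_lin.
by exists (M * `|w|) => y; rewrite /adj_dual mulrAC.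
Qed.

Lemma is_dual_adj_obs (Y G : normedModType R) (ipG : G -> G -> R) (C : Y -> G) (g : G) :
  is_inner ipG -> bounded_linear C -> is_dual (adj_obs ipG C g).
Proof.
move=> ipG_inner [C_lin [M hM]]; split.
  by move=> a x y; rewrite /adj_obs C_lin ipDl // ipZl.
exists (M * `|g|) => y; apply: le_trans (ip_norm_le ipG_inner _ _) _.
by rewrite mulrAC ler_wpM2r.
Qed.

End DualSpace.

Section Inverses.
Variables (R : realType) (Y W : normedModType R) (A : Y -> W -> R).
Hypothesis A_inv : cont_invertible A.

Lemma op_invE (f : W -> R) y : (forall w, A y w = f w) -> op_inv A f = y.
Proof.
case: A_inv => A_op A_inj _ _ hy; apply: xget_unique => // y' hy'.
apply/subr0_eq/A_inj => w; by rewrite (dual_opB A_op) hy hy' subrr.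
Qed.

Lemma op_invP (f : W -> R) : is_dual f -> forall w, A (op_inv A f) w = f w.
Proof. by case: A_inv => _ _ A_onto _ /A_onto [y hy]; rewrite (op_invE hy). Qed.

(* The functional f |-> rho (A^{-1} f) on W^* is evaluation at some w, by reflexivity. *)
Lemma adj_dual_invP (rho : Y -> R) :
  reflexive_space W -> is_dual rho -> forall y, A y (adj_dual_inv A rho) = rho y.
Proof.
move=> W_refl [rho_lin [Mr hMr]].
have [[A_dual A_lin _] _ _ [Mi hMi]] := A_inv.
suff [w hw] : exists w, forall y, A y w = rho y.
  exact: (@xgetPex _ 0 [set w | forall y, A y w = rho y] (ex_intro _ w hw)).
have phi_lin a (f g : W -> R) : is_dual f -> is_dual g ->
    rho (op_inv A (fun w => a * f w + g w)) = a * rho (op_inv A f) + rho (op_inv A g).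
  move=> hf hg; rewrite -rho_lin; congr rho.
  by apply: op_invE => w; rewrite A_lin !op_invP.
have phi_bounded : exists M, forall (f : W -> R) c, is_dual f -> 0 <= c ->
    dual_norm_le f c -> `|rho (op_inv A f)| <= M * c.
  exists (`|Mr| * Mi) => f c hf c_ge0 hfc; apply: le_trans (hMr _) _.
  have hinv : `|op_inv A f| <= Mi * c by apply: hMi => // w; rewrite op_invP.
  rewrite -mulrA; apply: le_trans (ler_wpM2r (normr_ge0 _) (ler_norm Mr)) _.
  exact: ler_wpM2l.
have [w hw] := W_refl _ phi_lin phi_bounded.
by exists w => y; rewrite -hw // (@op_invE (A y) y).
Qed.

End Inverses.

Lemma lin_sqr_ge0_eq0 (R : realType) (L Q : R) :
  0 <= Q -> (forall t, 0 <= t * L + t ^+ 2 * Q) -> L = 0.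
Proof.
move=> Q_ge0 hpos; set k := (Q + 1)^-1.
have k_gt0 : 0 < k by rewrite invr_gt0; lra.
have kQ : k * (Q + 1) = 1 by rewrite mulVf //; apply/eqP; lra.
have Lk_sqr_le0 : (L * k) ^+ 2 <= 0.
  have := hpos (- L * k).
  have -> : - L * k * L + (- L * k) ^+ 2 * Q = - (L * k) ^+ 2 + L ^+ 2 * k * (k * (Q + 1) - 1)
    by ring.
  by rewrite kQ subrr mulr0 addr0 oppr_ge0.
have /eqP : L * k = 0 by apply/eqP; rewrite -sqrf_eq0 eq_le Lk_sqr_le0 sqr_ge0.
by rewrite mulf_eq0 (gt_eqF k_gt0) orbF => /eqP.
Qed.

Section FirstOrderCondition.
Variables (R : realType) (U Y W G : normedModType R).
Variables (ipU : U -> U -> R) (ipG : G -> G -> R).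
Hypotheses (ipU_inner : is_inner ipU) (ipG_inner : is_inner ipG).
Variables (gd : G) (alpha : R) (A : Y -> W -> R) (B : U -> W -> R) (C : Y -> G).
Hypothesis alpha_gt0 : 0 < alpha.
Hypothesis A_lin : forall a x y w, A (a *: x + y) w = a * A x w + A y w.
Hypothesis B_lin : forall a x y w, B (a *: x + y) w = a * B x w + B y w.
Hypothesis C_lin : forall a x y, C (a *: x + y) = a *: C x + C y.

Lemma first_order_condition (ub : U) (yb : Y) :
  (forall w, A yb w = B ub w) ->
  (forall u y, (forall w, A y w = B u w) ->
     Jalpha C gd alpha ub yb <= Jalpha C gd alpha u y) ->
  forall (v : U) (z : Y), (forall w, A z w = B v w) ->
  alpha * ipU ub v + ipG (C yb - gd) (C z) = 0.
Proof.
move=> hcons hmin v z hz.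
have [hsU _ _] := ipU_inner; have [hsG _ _] := ipG_inner.
apply: (@lin_sqr_ge0_eq0 _ _ (2^-1 * `|C z| ^+ 2 + alpha / 2 * `|v| ^+ 2)).
  by apply: addr_ge0; apply: mulr_ge0; rewrite ?exprn_ge0 ?normr_ge0 ?divr_ge0 ?ltW.
move=> t.
have feasible w : A (t *: z + yb) w = B (t *: v + ub) w by rewrite A_lin B_lin hz hcons.
have := hmin _ _ feasible.
rewrite /Jalpha C_lin -addrA !(normD2 ipG_inner) !(normD2 ipU_inner) !normrZ !exprMn
  !real_normK ?num_real // (ipZl ipG_inner) (ipZl ipU_inner) (hsU v ub) (hsG (C z)).
nra.
Qed.

End FirstOrderCondition.

Section ErrorEstimates.
Variables (R : realType) (U G : normedModType R).
Variables (ipU : U -> U -> R) (ipG : G -> G -> R).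
Hypotheses (ipU_inner : is_inner ipU) (ipG_inner : is_inner ipG).
Variable alpha : R.
Hypothesis alpha_gt0 : 0 < alpha.

Lemma error_identity (ub ubh r : U) (yb ybh gd cz : G) :
  alpha * ipU ub (ubh - ub) + ipG (yb - gd) (ybh - yb - cz) = 0 ->
  ipU (ubh - ub) r = alpha * ipU (ubh - ub) ubh + ipG (ybh - yb - cz) (ybh - gd) ->
  alpha * `|ubh - ub| ^+ 2 + `|ybh - yb| ^+ 2 = ipU (ubh - ub) r + ipG (ybh - yb) cz.
Proof.
set e := ubh - ub; set c := ybh - yb => foc hr.
have [hsU _ hnU] := ipU_inner; have [hsG _ hnG] := ipG_inner.
have hee : ipU e e = ipU e ubh - ipU e ub by exact: ipBr.
have hcc : ipG (c - cz) (ybh - gd) - ipG (c - cz) (yb - gd) = ipG c c - ipG cz c.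
  by rewrite -ipBr // opprB addrA subrK ipBl.
rewrite -hnU -hnG hee hr (hsU ub) (hsG (yb - gd)) (hsG cz) in foc hcc *.
lra.
Qed.

Lemma error_bound (gamma sigma : R) (e r : U) (c cz : G) :
  1 <= gamma -> 1 <= sigma ->
  alpha * `|e| ^+ 2 + `|c| ^+ 2 = ipU e r + ipG c cz ->
  alpha * `|e| ^+ 2 + `|c| ^+ 2 <= gamma / alpha * `|r| ^+ 2 + sigma * `|cz| ^+ 2.
Proof.
move=> gamma_ge1 sigma_ge1 identity.
have := ip_young ipU_inner e r alpha_gt0.
have := ip_young ipG_inner c cz ltr01; rewrite invr1.
have hr : alpha^-1 * `|r| ^+ 2 <= gamma / alpha * `|r| ^+ 2.
  by rewrite -mulrA ler_peMl // mulr_ge0 ?sqr_ge0 // invr_ge0 ltW.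
have hcz : `|cz| ^+ 2 <= sigma * `|cz| ^+ 2 by rewrite ler_peMl ?sqr_ge0.
lra.
Qed.

Lemma cost_gap_le (ub ubh r : U) (yb ybh gd cz : G) :
  alpha * ipU ub (ubh - ub) + ipG (yb - gd) (ybh - yb - cz) = 0 ->
  alpha * `|ubh - ub| ^+ 2 + `|ybh - yb| ^+ 2 = ipU (ubh - ub) r + ipG (ybh - yb) cz ->
  2^-1 * `|ybh - gd| ^+ 2 + alpha / 2 * `|ubh| ^+ 2
    - (2^-1 * `|yb - gd| ^+ 2 + alpha / 2 * `|ub| ^+ 2)
  <= (2 * alpha)^-1 * `|r| ^+ 2 + ipG (ybh - gd) cz.
Proof.
set e := ubh - ub; set c := ybh - yb => foc id.
have [hsU _ _] := ipU_inner; have [hsG _ _] := ipG_inner.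
have Ny : `|ybh - gd| ^+ 2 = `|c| ^+ 2 + 2 * ipG c (yb - gd) + `|yb - gd| ^+ 2.
  by rewrite -normD2 // addrA subrK.
have Nu : `|ubh| ^+ 2 = `|e| ^+ 2 + 2 * ipU e ub + `|ub| ^+ 2.
  by rewrite -normD2 // subrK.
have Gcz : ipG (ybh - gd) cz = ipG c cz + ipG (yb - gd) cz.
  by rewrite -ipDl // addrA subrK.
have young := ip_young ipU_inner e r alpha_gt0.
rewrite (hsU ub) (ipBr ipG_inner) (hsG (yb - gd)) in foc.
rewrite Ny Nu Gcz invfM mulrC.
have := sqr_ge0 `|c|; lra.
Qed.

End ErrorEstimates.

Lemma admissible_sigma_gamma_ge1 (R : realType) (sigma gamma : R) :
  (sigma = 4 /\ 2 <= gamma) \/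
  (4 < sigma /\ 2 * sigma / (sigma + Num.sqrt (sigma ^+ 2 - 4 * sigma)) < gamma) ->
  1 <= gamma /\ 1 <= sigma.
Proof.
case=> [[-> gamma_ge2] | [sigma_gt4]]; first by split; lra.
set s := Num.sqrt _ => threshold_lt.
have s_ge0 : 0 <= s by exact: sqrtr_ge0.
have s_sqr : s ^+ 2 = sigma ^+ 2 - 4 * sigma by rewrite sqr_sqrtr //; nra.
have s_lt : s < sigma by nra.
have denK : 2 * sigma / (sigma + s) * (sigma + s) = 2 * sigma.
  by rewrite divfK //; apply/eqP; lra.
have : 1 <= 2 * sigma / (sigma + s) by nra.
split; lra.
Qed.

Unset Implicit Arguments. Set Strict Implicit.

Theorem proposition3p1 (R : realType)
  (U W Y G : completeNormedModType R)
  (ipU : U -> U -> R) (ipG : G -> G -> R)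
  (hU : is_inner ipU) (hG : is_inner ipG)
  (hW : reflexive_space W) (hY : reflexive_space Y)
  (gd : G) (alpha : R) (halpha : 0 < alpha)
  (A : Y -> W -> R) (B : U -> W -> R) (C : Y -> G)
  (hA : cont_invertible A) (hB : dual_op B) (hC : bounded_linear C)
  (Bs : W -> U) (hBs : forall u w, ipU u (Bs w) = B u w)
  (Uh : set U) (Yh : set Y) (Wh : set W)
  (hUh : fin_subspace Uh) (hYh : fin_subspace Yh) (hWh : fin_subspace Wh)
  (ub : U) (yb : Y)
  (hcons : forall w, A yb w = B ub w)
  (hmin : forall u y, (forall w, A y w = B u w) ->
            Jalpha C gd alpha ub yb <= Jalpha C gd alpha u y)
  (ubh : U) (ybh : Y) (wbh : W)
  (hubh : Uh ubh) (hybh : Yh ybh) (hwbh : Wh wbh)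
  (hconsh : forall wh, Wh wh -> A ybh wh - B ubh wh = 0)
  (hminh : forall u y, Uh u -> Yh y -> (forall wh, Wh wh -> A y wh - B u wh = 0) ->
            Jalpha C gd alpha ubh ybh <= Jalpha C gd alpha u y)
  (hopt1 : forall yh, Yh yh ->
            adj_obs ipG C (C ybh - gd) yh + adj_dual A wbh yh = 0)
  (hopt2 : alpha *: ubh - orth_proj ipU Uh (Bs wbh) = 0)
  (sigma gamma : R)
  (hsg : (sigma = 4 /\ 2 <= gamma) \/
         (4 < sigma /\ 2 * sigma / (sigma + Num.sqrt (sigma ^+ 2 - 4 * sigma)) < gamma)) :
  let rho_w : Y -> R := fun y => adj_obs ipG C (C ybh - gd) y + adj_dual A wbh y in
  let rho_u : U := alpha *: ubh - Bs wbh in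
  let rho_y : W -> R := fun w => A ybh w - B ubh w in
  alpha * `|ubh - ub| ^+ 2 + `|C ybh - C yb| ^+ 2
    <= gamma / alpha * `|Bs (adj_dual_inv A rho_w) + rho_u| ^+ 2
       + sigma * `|C (op_inv A rho_y)| ^+ 2
  /\
  Jalpha C gd alpha ubh ybh - Jalpha C gd alpha ub yb
    <= (2 * alpha)^-1 * `|Bs (adj_dual_inv A rho_w) + rho_u| ^+ 2
       + ipG (C ybh - gd) (C (op_inv A rho_y)).
Proof.
move=> rho_w rho_u rho_y.
have [A_op _ _ _] := hA; have [A_dual A_lin _] := A_op; have [B_dual B_lin _] := hB.
set z := op_inv A rho_y; set q := adj_dual_inv A rho_w.
have hz : forall w, A z w = rho_y w.
  exact/(op_invP hA)/(is_dualD (A_dual ybh) (is_dualN (B_dual ubh))).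
have hq : forall y, A y q = rho_w y.
  apply: (adj_dual_invP hA hW).
  exact: is_dualD (is_dual_adj_obs _ hG hC) (is_dual_adj_dual wbh A_op).
have feasible w : A (ybh - z - yb) w = B (ubh - ub) w.
  by rewrite !(dual_opB A_op) (dual_opB hB) hz hcons /rho_y; ring.
have Cdir : C (ybh - z - yb) = C ybh - C yb - C z.
  by rewrite !(bounded_linearB hC) addrAC.
have foc := first_order_condition hU hG halpha A_lin B_lin (proj1 hC) hcons hmin feasible.
have rho_w_tested : ipU (ubh - ub) (Bs q + rho_u)
    = alpha * ipU (ubh - ub) ubh + ipG (C ybh - C yb - C z) (C ybh - gd).
  have := hq (ybh - z - yb).
  rewrite /rho_w /adj_obs /adj_dual !feasible -!hBs Cdir /rho_u.
  by rewrite (ipDr hU) (ipBr hU) (ipZr hU); lra.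
rewrite Cdir in foc.
have identity := error_identity hU hG foc rho_w_tested.
have [gamma_ge1 sigma_ge1] := admissible_sigma_gamma_ge1 hsg.
split; first exact (error_bound hU hG halpha gamma_ge1 sigma_ge1 identity).
rewrite /Jalpha; exact (cost_gap_le hU hG halpha foc identity).
Qed.
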